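(* Let $\preceq$ be an $\omega$-recognizable preorder over $\Sigma$ and $\sim$ its induced equivalence relation. Then every equivalence class of $\sim$ contains a lasso (an ultimately periodic word $\mu(\nu)^\omega$ with $\mu,\nu\in\Sigma^*$, $\nu$ nonempty). Moreover, for every $x\in\Sigma^\omega$ there exists a prefix $\mu\nu$ of $x$ such that $x\sim\mu(\nu)^\omega$.
   Context: A relation on $\Sigma^\omega$ is $\omega$-recognizable if it equals $\bigcup_{k=1}^{\ell}X_k\times Y_k$ with $X_k,Y_k\subseteq\Sigma^\omega$ $\omega$-regular. A preorder is reflexive and transitive; $x\sim y$ iff $x\preceq y$ and $y\preceq x$. *)

From mathcomp Require Import all_boot.
Set Implicit Arguments. Unset Strict Implicit. Unset Printing Implicit Defensive.

Definition oword (S : Type) := nat -> S.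

Record buchi (S : finType) := Buchi {
  bstate : finType;
  binit : pred bstate;
  btrans : bstate -> S -> bstate -> bool;
  bacc : pred bstate }.

Definition accepts (S : finType) (A : buchi S) (x : oword S) : Prop :=
  exists r : nat -> bstate A,
    [/\ @binit S A (r 0),
        (forall n, @btrans S A (r n) (x n) (r n.+1)) &
        (forall n, exists2 m, n <= m & @bacc S A (r m))].

Definition omega_regular (S : finType) (L : oword S -> Prop) : Prop :=
  exists A : buchi S, forall x, L x <-> accepts A x.

Definition omega_recognizable (S : finType) (R : oword S -> oword S -> Prop) : Prop :=
  exists (l : nat) (X Y : 'I_l -> oword S -> Prop),
    (forall k, omega_regular (X k) /\ omega_regular (Y k)) /\
    (forall x y, R x y <-> exists k, X k x /\ Y k y).

Definition is_preorder (S : Type) (R : S -> S -> Prop) : Prop :=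
  (forall x, R x x) /\ (forall x y z, R x y -> R y z -> R x z).

Definition equivR (S : Type) (R : S -> S -> Prop) (x y : S) : Prop := R x y /\ R y x.

(** [w] is the lasso mu (nu)^omega, with nu nonempty.  (The default of [nth]
    is irrelevant since the index is always in range.) *)
Definition is_lasso (S : Type) (mu nu : seq S) (w : oword S) : Prop :=
  nu <> [::] /\
  forall n, w n = nth (w n) (mu ++ nu)
              (if n < size mu then n else size mu + (n - size mu) %% size nu).

Definition oprefix (S : Type) (u : seq S) (x : oword S) : Prop :=
  forall i, i < size u -> x i = nth (x i) u i.

From mathcomp Require Import all_boot.
Set Implicit Arguments. Unset Strict Implicit.

(* Since x ~ x, the pair (x, x) lies in some X_k * Y_k.  Fix accepting runs on
   x of Buchi automata for X_k and Y_k.  By pigeonhole there are positions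
   i < j at which both runs are in the same states and between which both
   visit accepting states; pumping the segment [i, j) then yields runs on the
   lasso x[0, i) x[i, j)^omega, so this lasso w is in X_k and in Y_k as well,
   whence both (x, w) and (w, x) are in the relation. *)

Lemma modnS_cycle m d : 0 < d ->
  m.+1 %% d = if (m %% d).+1 == d then 0 else (m %% d).+1.
Proof.
move=> d_gt0; rewrite -addn1 -modnDml addn1.
case: eqP => [-> | ne]; first exact: modnn.
by rewrite modn_small // ltn_neqAle; apply/andP; split; [apply/eqP | apply: ltn_pmod].
Qed.

Lemma has_index_iotaP (P : pred nat) n m :
  reflect (exists2 a, n <= a < m & P a) (has P (index_iota n m)).
Proof.
by apply: (iffP hasP) => -[a a_nm Pa]; exists a; rewrite ?mem_index_iota in a_nm *.
Qed.

Lemma has_index_iota_ltn (P : pred nat) n m : has P (index_iota n m) -> n < m.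
Proof. by case/has_index_iotaP=> a /andP[/leq_ltn_trans lt_nm /lt_nm]. Qed.

Lemma has_index_iota_widen (P : pred nat) n m m' :
  m <= m' -> has P (index_iota n m) -> has P (index_iota n m').
Proof.
move=> le_mm' /has_index_iotaP[a /andP[le_na lt_am] Pa].
by apply/has_index_iotaP; exists a; rewrite // le_na (leq_trans lt_am).
Qed.

Section LassoIndex.
Variables i j : nat.
Hypothesis lt_ij : i < j.

(* Position in x[0, j) read at time n by the lasso x[0, i) x[i, j)^omega. *)
Definition lasso_index n := if n < i then n else i + (n - i) %% (j - i).

Lemma lasso_index0 : lasso_index 0 = 0.
Proof. by rewrite /lasso_index lt0n; case: eqP => [-> | //]; rewrite mod0n. Qed.

Lemma lasso_index_lt n : lasso_index n < j.
Proof.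
rewrite /lasso_index; case: ifP => [lt_ni | _]; first exact: ltn_trans lt_ij.
by rewrite -ltn_subRL ltn_pmod // subn_gt0.
Qed.

Lemma lasso_indexS n :
  lasso_index n.+1 = if (lasso_index n).+1 == j then i else (lasso_index n).+1.
Proof.
rewrite /lasso_index; case: (ltnP n i) => [lt_ni | le_in].
  case: (ltnP n.+1 i) => [lt_Sni | le_iSn]; first by rewrite ltn_eqF // (ltn_trans lt_Sni).
  have -> : n.+1 = i by apply/eqP; rewrite eqn_leq lt_ni.
  by rewrite subnn mod0n addn0 ltn_eqF.
rewrite ltnNge (leq_trans le_in) // subSn // modnS_cycle ?subn_gt0 //.
rewrite -(eqn_add2l i) subnKC ?(ltnW lt_ij) // addnS.
by case: eqP; rewrite ?addn0 ?addnS.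
Qed.

Lemma lasso_index_cycle a K : i <= a < j -> lasso_index (a + K * (j - i)) = a.
Proof.
case/andP=> le_ia lt_aj; rewrite /lasso_index ltnNge (leq_trans le_ia) ?leq_addr //=.
by rewrite -addnBAC // (addnC (a - i)) modnMDl modn_small ?subnKC // ltn_sub2r.
Qed.

End LassoIndex.

Definition loop_word (S : Type) (x : oword S) i j : oword S :=
  fun n => x (lasso_index i j n).

Lemma loop_word_lasso (S : Type) (x : oword S) i j : i < j ->
  is_lasso (take i (mkseq x j)) (drop i (mkseq x j)) (loop_word x i j).
Proof.
move=> lt_ij; split.
  by move/(congr1 size)/eqP; rewrite size_drop size_mkseq subn_eq0 leqNgt lt_ij.
move=> n; rewrite cat_take_drop size_drop size_take !size_mkseq lt_ij.
by rewrite nth_mkseq // lasso_index_lt.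
Qed.

Lemma oprefix_mkseq (S : Type) (x : oword S) n : oprefix (mkseq x n) x.
Proof. by move=> t; rewrite size_mkseq => lt_tn; rewrite nth_mkseq. Qed.

Lemma accepts_loop_word (S : finType) (A : buchi S) (x : oword S)
    (r : nat -> bstate A) i j :
  binit (r 0) -> (forall n, btrans (r n) (x n) (r n.+1)) ->
  r i = r j -> has (@bacc S A \o r) (index_iota i j) ->
  accepts A (loop_word x i j).
Proof.
move=> init_r trans_r r_ij acc_ij; have lt_ij := has_index_iota_ltn acc_ij.
case/has_index_iotaP: acc_ij => a a_ij acc_a.
exists (fun n => r (lasso_index i j n)); split.
- by rewrite lasso_index0.
- move=> n; rewrite lasso_indexS //; case: eqP => [wrap | _]; last exact: trans_r.
  by rewrite r_ij -[in r j]wrap; apply: trans_r.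
- move=> n; exists (a + n * (j - i)); last by rewrite lasso_index_cycle.
  by rewrite (leq_trans _ (leq_addl _ _)) // leq_pmulr // subn_gt0.
Qed.

Lemma nat_fun_repeats (T : finType) (f : nat -> T) :
  exists m m', m < m' /\ f m = f m'.
Proof.
pose g (k : 'I_#|T|.+1) := f k.
have /injectivePn[k [k' ne_kk' eq_g]] : ~~ injectiveb g.
  by apply/negP=> /injectiveP/leq_card; rewrite card_ord ltnn.
case: (ltngtP k k') => [lt_kk' | lt_k'k | /val_inj eq_kk'].
- by exists k, k'.
- by exists k', k.
- by rewrite eq_kk' eqxx in ne_kk'.
Qed.

Section CommonLoop.
Variables (T1 T2 : finType) (r1 : nat -> T1) (r2 : nat -> T2).
Variables (P1 : pred T1) (P2 : pred T2).
Hypothesis often1 : forall n, exists2 m, n <= m & P1 (r1 m).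
Hypothesis often2 : forall n, exists2 m, n <= m & P2 (r2 m).

Definition visits_both n m :=
  has (P1 \o r1) (index_iota n m) && has (P2 \o r2) (index_iota n m).

Lemma visits_both_widen n m m' : m <= m' -> visits_both n m -> visits_both n m'.
Proof.
by move=> le_mm' /andP[h1 h2]; rewrite /visits_both !(has_index_iota_widen le_mm').
Qed.

Lemma visits_both_exists n : exists m, visits_both n m.
Proof.
have [m1 le_nm1 p1] := often1 n; have [m2 le_nm2 p2] := often2 n.
exists (maxn m1 m2).+1; apply/andP; split; apply/has_index_iotaP.
  by exists m1; rewrite // le_nm1 ltnS leq_maxl.
by exists m2; rewrite // le_nm2 ltnS leq_maxr.
Qed.

Definition next_round n := xchoose (visits_both_exists n).

Lemma common_loop : exists i j,
  [/\ r1 i = r1 j, r2 i = r2 j,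
      has (P1 \o r1) (index_iota i j) & has (P2 \o r2) (index_iota i j)].
Proof.
pose round k := iter k next_round 0.
have round_visits k : visits_both (round k) (round k.+1) := xchooseP _.
have round_le : {homo round : k k' / k <= k'}.
  apply: homo_leq => [// | ? ? ? | k]; first exact: leq_trans.
  by case/andP: (round_visits k) => /has_index_iota_ltn/ltnW.
have [k [k' [lt_kk' [eq1 eq2]]]] := nat_fun_repeats (fun k => (r1 (round k), r2 (round k))).
have /andP[h1 h2] := visits_both_widen (round_le _ _ lt_kk') (round_visits k).
by exists (round k), (round k').
Qed.

End CommonLoop.

Lemma accepts2_loop_word (S : finType) (A B : buchi S) (x : oword S) :
  accepts A x -> accepts B x ->
  exists i j, [/\ i < j, accepts A (loop_word x i j) & accepts B (loop_word x i j)].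
Proof.
move=> [rA [initA transA accA]] [rB [initB transB accB]].
have [i [j [eqA eqB visA visB]]] := common_loop accA accB.
exists i, j; split; first exact: has_index_iota_ltn visA.
  exact: accepts_loop_word initA transA eqA visA.
exact: accepts_loop_word initB transB eqB visB.
Qed.

Theorem lemma17 (S : finType) (R : oword S -> oword S -> Prop) :
  omega_recognizable R -> is_preorder R ->
  (forall x : oword S, exists (mu nu : seq S) (w : oword S),
      is_lasso mu nu w /\ equivR R x w) /\
  (forall x : oword S, exists (mu nu : seq S) (w : oword S),
      is_lasso mu nu w /\ oprefix (mu ++ nu) x /\ equivR R x w).
Proof.
move=> [l [X [Y [regXY defR]]]] [reflR _].
have prefix_lasso x : exists (mu nu : seq S) (w : oword S),
    is_lasso mu nu w /\ oprefix (mu ++ nu) x /\ equivR R x w.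
  have [k [Xx Yx]] := (defR x x).1 (reflR x).
  have [[A defA] [B defB]] := regXY k.
  have [i [j [lt_ij Aw Bw]]] := accepts2_loop_word ((defA x).1 Xx) ((defB x).1 Yx).
  exists (take i (mkseq x j)), (drop i (mkseq x j)), (loop_word x i j).
  split; first exact: loop_word_lasso.
  rewrite cat_take_drop; split; first exact: oprefix_mkseq.
  have Xw := (defA _).2 Aw; have Yw := (defB _).2 Bw.
  by split; apply/defR; exists k.
split=> // x; have [mu [nu [w [lasso_w [_ equiv_xw]]]]] := prefix_lasso x.
by exists mu, nu, w.
Qed.
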